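(* For $0<p<1$ and $0<\varepsilon<1$, $$\frac{1}{1+\frac{1}{p\log(1/\varepsilon)}}\le\min\Big\{1-\varepsilon,\;p\log\frac1\varepsilon\Big\}\le\frac{2}{1+\frac{1}{p\log(1/\varepsilon)}}.$$
   Context: $\log$ is the natural logarithm. *)

From Stdlib Require Import Reals.

(** Writing [a = p ln(1/eps)], the bounds are [a/(1+a) <= min(1-eps, a) <= 2a/(1+a)].
    The lower bound against [1 - eps] amounts to [eps (1 + a) <= 1], which follows from
    [a < ln(1/eps) <= 1/eps - 1]; the upper bound holds because [min(1, a) <= 2a/(1+a)]. *)
From Stdlib Require Import Reals Lra.
Open Scope R_scope.

Lemma ln_le_sub1 (x : R) : 0 < x -> ln x <= x - 1.
Proof.
  intros hx.
  pose proof (exp_ineq1_le (ln x)) as h.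
  rewrite exp_ln in h; lra.
Qed.

Lemma ln_inv_pos (eps : R) : 0 < eps -> eps < 1 -> 0 < ln (1 / eps).
Proof.
  intros he0 he1.
  rewrite <- ln_1; apply ln_increasing; [lra|].
  unfold Rdiv; rewrite Rmult_1_l; rewrite <- Rinv_1.
  apply Rinv_lt_contravar; lra.
Qed.

Lemma inv_one_add_inv (a : R) : 0 < a -> 1 / (1 + 1 / a) = a / (1 + a).
Proof. intros ha; field; lra. Qed.

Lemma le_div_one_add (a c d : R) : 0 < a -> c * (1 + a) <= d -> c <= d / (1 + a).
Proof.
  intros ha h.
  apply (Rmult_le_reg_r (1 + a)); [lra|].
  unfold Rdiv; rewrite Rmult_assoc, Rinv_l; lra.
Qed.

Lemma div_one_add_le (a c d : R) : 0 < a -> c <= d * (1 + a) -> c / (1 + a) <= d.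
Proof.
  intros ha h.
  apply (Rmult_le_reg_r (1 + a)); [lra|].
  unfold Rdiv; rewrite Rmult_assoc, Rinv_l; lra.
Qed.

Lemma mul_one_add_scaled_ln_inv_le1 (p eps : R) : 0 < p -> p < 1 -> 0 < eps -> eps < 1 ->
  eps * (1 + p * ln (1 / eps)) <= 1.
Proof.
  intros hp0 hp1 he0 he1.
  assert (hL := ln_inv_pos eps he0 he1).
  assert (hinv_pos : 0 < 1 / eps) by (apply Rdiv_lt_0_compat; lra).
  assert (hle := ln_le_sub1 (1 / eps) hinv_pos).
  assert (hinv : eps * (1 / eps) = 1) by (field; lra).
  assert (hpL : p * ln (1 / eps) <= ln (1 / eps)) by nra.
  nra.
Qed.

Lemma Rmin_le_two_mul_div (a b : R) : 0 < a -> b <= 1 -> Rmin b a <= 2 * a / (1 + a).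
Proof.
  intros ha hb.
  destruct (Rle_dec a 1).
  - eapply Rle_trans; [apply Rmin_r|].
    apply le_div_one_add; [exact ha|].
    assert (a * a <= a * 1) by (apply Rmult_le_compat_l; lra).
    lra.
  - eapply Rle_trans; [apply Rmin_l|].
    apply le_div_one_add; [exact ha|].
    assert (b * (1 + a) <= 1 * (1 + a)) by (apply Rmult_le_compat_r; lra).
    lra.
Qed.

Theorem lemma2 (p eps : R) (hp0 : 0 < p) (hp1 : p < 1)
  (he0 : 0 < eps) (he1 : eps < 1) :
  1 / (1 + 1 / (p * ln (1 / eps))) <= Rmin (1 - eps) (p * ln (1 / eps)) /\
  Rmin (1 - eps) (p * ln (1 / eps)) <= 2 / (1 + 1 / (p * ln (1 / eps))).
Proof.
  assert (hea := mul_one_add_scaled_ln_inv_le1 p eps hp0 hp1 he0 he1).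
  assert (ha : 0 < p * ln (1 / eps)) by (apply Rmult_lt_0_compat; auto using ln_inv_pos).
  set (a := p * ln (1 / eps)) in *.
  rewrite inv_one_add_inv by exact ha.
  replace (2 / (1 + 1 / a)) with (2 * a / (1 + a)) by (field; lra).
  split.
  - apply Rmin_glb; apply div_one_add_le; nra.
  - apply Rmin_le_two_mul_div; lra.
Qed.
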